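(* For every positive integer $n$, $N'(n,0,n-1)=n-1$.
   Context: $\mathbb{Z}_4$ is the ring of integers modulo $4$; a $\mathbb{Z}_4$-code of length $n$ is a $\mathbb{Z}_4$-submodule of $\mathbb{Z}_4^n$. Two codes are equivalent if one is obtained from the other by permuting coordinates and changing the signs of some coordinates. Every $\mathbb{Z}_4$-code is permutation-equivalent to one with generator matrix $\begin{pmatrix} I_{k_1} & A & B \\ O & 2I_{k_2} & 2D\end{pmatrix}$ with $A,D$ $(0,1)$-matrices and $B$ a $\mathbb{Z}_4$-matrix; the code then has type $4^{k_1}2^{k_2}$. The trivial extension of a code $C$ of length $n-1$ is $\{(c,0)\mid c\in C\}$ (the only code of length $0$ is the zero code). $N'(n,k_1,k_2)$ denotes the number of equivalence classes of $\mathbb{Z}_4$-codes of length $n$ and type $4^{k_1}2^{k_2}$ that are not equivalent to the trivial extension of any $\mathbb{Z}_4$-code of length $n-1$. *)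

From HB Require Import structures.
From mathcomp Require Import all_boot all_order all_fingroup all_algebra.
Set Implicit Arguments. Unset Strict Implicit. Unset Printing Implicit Defensive.
Import GRing.Theory.
Local Open Scope ring_scope.

Notation word n := 'rV['Z_4]_n.

Definition is_code (n : nat) (C : {set word n}) : bool :=
  [&& (0 : word n) \in C,
      [forall x in C, forall y in C, x + y \in C] &
      [forall a : 'Z_4, forall x in C, a *: x \in C]].

Definition monomial (n : nat) (s : 'S_n) (e : {ffun 'I_n -> bool}) (x : word n)
  : word n := \row_j ((-1) ^+ e j * x 0 (s j)).

Definition perm_word (n : nat) (s : 'S_n) (x : word n) : word n :=
  \row_j x 0 (s j).

Definition perm_code (n : nat) (s : 'S_n) (C : {set word n}) : {set word n} :=
  [set perm_word s x | x in C].

Definition code_equiv (n : nat) (C D : {set word n}) : bool :=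
  [exists s : 'S_n, exists e : {ffun 'I_n -> bool},
     D == [set monomial s e x | x in C]].

(* G : 'M_(k1+k2, n) is of the standard form
   ( I_k1  A      B   )
   ( O     2I_k2  2D  )  with A, D (0,1)-matrices. *)
Definition std_gen (k1 k2 n : nat) (G : 'M['Z_4]_(k1 + k2, n)) : bool :=
  [forall i : 'I_(k1 + k2), forall j : 'I_n,
     if (i < k1)%N then
       (if (j < k1)%N then G i j == (i == j :> nat)%:R
        else if (j < k1 + k2)%N then (G i j == 0) || (G i j == 1)
        else true)
     else
       (if (j < k1)%N then G i j == 0
        else if (j < k1 + k2)%N then G i j == (i == j :> nat)%:R *+ 2
        else (G i j == 0) || (G i j == 2%:R))].

Definition has_type (n k1 k2 : nat) (C : {set word n}) : bool :=
  (k1 + k2 <= n)%N &&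
  [exists s : 'S_n, exists G : 'M['Z_4]_(k1 + k2, n),
     std_gen G && (perm_code s C == [set c *m G | c : 'rV['Z_4]_(k1 + k2)])].

(* Trivial extension (c, 0) of a word of length n.-1 to length n. *)
Definition triv_ext_word (n : nat) (c : word n.-1) : word n :=
  \row_(j < n) match (insub (val j) : option 'I_n.-1) with
               | Some j' => c 0 j'
               | None => 0
               end.

Definition triv_ext (n : nat) (D : {set word n.-1}) : {set word n} :=
  [set triv_ext_word c | c in D].

Definition good_code (n k1 k2 : nat) (C : {set word n}) : bool :=
  [&& is_code C, has_type k1 k2 C &
      ~~ [exists D : {set word n.-1}, is_code D && code_equiv C (@triv_ext n D)]].

Definition Nprime (n k1 k2 : nat) : nat :=
  #|[set [set D : {set word n} | good_code k1 k2 D && code_equiv C D]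
      | C in [set C : {set word n} | good_code k1 k2 C]]|.

From mathcomp Require Import all_boot all_order all_fingroup all_algebra.
Set Implicit Arguments. Unset Strict Implicit. Unset Printing Implicit Defensive.
Import GRing.Theory.
Local Open Scope ring_scope.

(* A code of type 2^(n-1) and length n has, up to a coordinate permutation,
   generator matrix (2I | 2d); it is therefore the parity code
   K_S = {x in 2Z4^n | sum_(j in S) x_j = 0} of a nonempty S (encoded below by
   x + x = 0 on every coordinate).  Sign changes fix every word of 2Z4^n, so a
   monomial map only permutes S: K_S ~ K_T iff |S| = |T|, and S is recovered
   from K_S as the set of j with 2e_j not in K_S.  A trivial extension vanishes
   on its last coordinate, and the only parity codes vanishing on a coordinate
   i are those with S = {i}; hence the good codes are the K_S with |S| >= 2,
   and their classes are indexed by |S| in {2, ..., n}. *)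

Lemma card_classes_by_invariant (T U : finType) (P : pred T) (R : rel T)
    (f : T -> U) :
  {in P &, forall x y, R x y = (f x == f y)} ->
  #|[set [set y | P y && R x y] | x in [set x | P x]]|
    = #|[set f x | x in [set x | P x]]|.
Proof.
move=> Rf; pose fiber u := [set y | P y && (f y == u)].
have -> : [set [set y | P y && R x y] | x in [set x | P x]]
        = [set fiber (f x) | x in [set x | P x]].
  apply: eq_in_imset => x; rewrite inE => Px; apply/setP => y.
  by rewrite !inE; case Py: (P y); rewrite //= Rf // eq_sym.
rewrite imset_comp card_in_imset // => _ v /imsetP[x + ->] _ fiber_eq.
rewrite inE => Px; have : x \in fiber (f x) by rewrite inE Px eqxx.
by rewrite fiber_eq inE => /andP[_ /eqP].
Qed.

Lemma card_ord_geq (N k : nat) : #|[set i : 'I_N | (k <= i)%N]| = (N - k)%N.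
Proof.
rewrite -sum1_card (eq_bigl (fun i : 'I_N => true && (k <= i))%N) => [|i].
  by rewrite -(big_geq_mkord k N xpredT (fun=> 1%N)) sum_nat_const_nat muln1.
by rewrite inE.
Qed.

Lemma exists_perm_imset (T : finType) (A B : {set T}) :
  #|A| = #|B| -> exists s : {perm T}, s @: A = B.
Proof.
move=> cardAB; pose sq (X : {set T}) := enum X ++ enum (~: X).
have sqP X : uniq (sq X) /\ forall x, x \in sq X.
  split; last by move=> x; rewrite mem_cat !mem_enum inE orbN.
  rewrite cat_uniq !enum_uniq andbT /=.
  by apply/hasPn => x; rewrite !mem_enum inE => ->.
have size_sq X : size (sq X) = #|T|.
  by rewrite size_cat -!cardE cardsC.
have [[_ inA] [uB _]] := (sqP A, sqP B).
pose f x := nth x (sq B) (index x (sq A)).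
have fK : cancel f (fun y => nth y (sq A) (index y (sq B))).
  move=> x; rewrite /f index_uniq ?nth_index //.
  by rewrite size_sq -(size_sq A) index_mem.
exists (perm (can_inj fK)); apply/eqP.
rewrite eqEcard card_imset; last exact: perm_inj.
rewrite cardAB leqnn andbT; apply/subsetP => y /imsetP[x xA ->].
have iB : (index x (sq A) < size (enum B))%N.
  by rewrite index_cat mem_enum xA -cardE -cardAB cardE index_mem mem_enum.
by rewrite permE /f nth_cat iB -(mem_enum B) mem_nth.
Qed.

Lemma Z4_two_add_two : (2%:R + 2%:R : 'Z_4) = 0.
Proof. exact/val_inj. Qed.

Lemma Z4_two_neq0 : (2%:R : 'Z_4) != 0.
Proof. by []. Qed.

Lemma Z4_opp_of_order2 (a : 'Z_4) : a + a = 0 -> - a = a.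
Proof.
by case: a => [[|[|[|[|k]]]] ?] /eqP; rewrite -val_eqE //= => _; apply/val_inj.
Qed.

Lemma Z4_half_of_order2 (a : 'Z_4) : a + a = 0 -> (a == 2%:R)%:R * 2%:R = a.
Proof.
by case: a => [[|[|[|[|k]]]] ?] /eqP; rewrite -val_eqE //= => _; apply/val_inj.
Qed.

Lemma signr_order2 (b : bool) (a : 'Z_4) : a + a = 0 -> (-1) ^+ b * a = a.
Proof. by case: b; rewrite ?mul1r ?mulN1r // => /Z4_opp_of_order2. Qed.

Lemma signr_order2E (b : bool) (a : 'Z_4) :
  ((-1) ^+ b * a + (-1) ^+ b * a == 0) = (a + a == 0).
Proof. by case: b; rewrite ?mul1r ?mulN1r // -opprD oppr_eq0. Qed.

Section ParityCode.
Variable n : nat.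

Definition twice_unit (j : 'I_n) : word n := \row_i (if i == j then 2%:R else 0).

Definition parity_code (S : {set 'I_n}) : {set word n} :=
  [set x : word n | [forall j, x 0 j + x 0 j == 0] & \sum_(j in S) x 0 j == 0].

Definition parity_support (C : {set word n}) : {set 'I_n} :=
  [set j | twice_unit j \notin C].

Lemma twice_unit_order2 (j i : 'I_n) : twice_unit j 0 i + twice_unit j 0 i = 0.
Proof. by rewrite mxE; case: ifP; rewrite ?addr0 ?Z4_two_add_two. Qed.

Lemma sum_twice_unit (S : {set 'I_n}) (j : 'I_n) :
  \sum_(i in S) twice_unit j 0 i = if j \in S then 2%:R else 0.
Proof.
under eq_bigr do rewrite mxE.
rewrite -big_mkcondr /=; case: ifP => jS; last first.
  by rewrite big1 // => i /andP[iS /eqP ij]; rewrite -ij iS in jS.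
rewrite (bigD1 j) /=; last by rewrite jS eqxx.
by rewrite big1 ?addr0 // => i /andP[/andP[_ /eqP ->]]; rewrite eqxx.
Qed.

Lemma twice_unit_in_parity_code (S : {set 'I_n}) (j : 'I_n) :
  (twice_unit j \in parity_code S) = (j \notin S).
Proof.
rewrite inE sum_twice_unit.
have -> : [forall i, twice_unit j 0 i + twice_unit j 0 i == 0].
  by apply/forallP => i; rewrite twice_unit_order2.
by case: (j \in S); rewrite /= ?eqxx ?(negbTE Z4_two_neq0).
Qed.

Lemma parity_codeK : cancel parity_code parity_support.
Proof.
by move=> S; apply/setP => j; rewrite inE twice_unit_in_parity_code negbK.
Qed.

Lemma parity_code_inj : injective parity_code.
Proof. exact: can_inj parity_codeK. Qed.

Lemma is_code_parity_code (S : {set 'I_n}) : is_code (parity_code S).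
Proof.
apply/and3P; split.
- rewrite inE; apply/andP; split; first by apply/forallP => j; rewrite mxE addr0.
  by rewrite big1 // => j _; rewrite mxE.
- apply/forallP => x; apply/implyP; rewrite inE => /andP[/forallP hx sx].
  apply/forallP => y; apply/implyP; rewrite inE => /andP[/forallP hy sy].
  rewrite inE; apply/andP; split.
    by apply/forallP => j; rewrite mxE addrACA (eqP (hx j)) (eqP (hy j)) addr0.
  under eq_bigr do rewrite mxE.
  by rewrite big_split /= (eqP sx) (eqP sy) addr0.
- apply/forallP => a; apply/forallP => x; apply/implyP.
  rewrite !inE => /andP[/forallP hx sx]; apply/andP; split.
    by apply/forallP => j; rewrite mxE -mulrDr (eqP (hx j)) mulr0.
  under eq_bigr do rewrite mxE.
  by rewrite -mulr_sumr (eqP sx) mulr0.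
Qed.

Lemma monomialK (s : 'S_n) (e : {ffun 'I_n -> bool}) :
  cancel (monomial s e) (monomial s^-1%g [ffun j => e (s^-1 j)%g]).
Proof. by move=> x; apply/rowP => j; rewrite !mxE ffunE permKV signrMK. Qed.

Lemma monomialVK (s : 'S_n) (e : {ffun 'I_n -> bool}) :
  cancel (monomial s^-1%g [ffun j => e (s^-1 j)%g]) (monomial s e).
Proof. by move=> x; apply/rowP => j; rewrite !mxE ffunE permK signrMK. Qed.

Lemma monomial_inj (s : 'S_n) (e : {ffun 'I_n -> bool}) : injective (monomial s e).
Proof. exact: can_inj (monomialK s e). Qed.

Lemma perm_word_monomial (s : 'S_n) : perm_word s =1 monomial s [ffun=> false].
Proof. by move=> x; apply/rowP => j; rewrite !mxE ffunE mul1r. Qed.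

Lemma monomial_in_parity_code (s : 'S_n) (e : {ffun 'I_n -> bool}) x T :
  (monomial s e x \in parity_code T) = (x \in parity_code (s @: T)).
Proof.
rewrite !inE; have -> : [forall j, monomial s e x 0 j + monomial s e x 0 j == 0]
                        = [forall j, x 0 j + x 0 j == 0].
  apply/forallP/forallP => x2 j; last by rewrite mxE signr_order2E x2.
  by move: (x2 (s^-1 j)%g); rewrite mxE signr_order2E permKV.
case: forallP => //= x2; rewrite big_imset /=; last first.
  by move=> i j _ _; apply: perm_inj.
congr (_ == 0); apply: eq_bigr => j _.
by rewrite mxE signr_order2 //; apply/eqP.
Qed.

Lemma monomial_parity_code (s : 'S_n) (e : {ffun 'I_n -> bool}) S :
  [set monomial s e x | x in parity_code S] = parity_code (s @^-1: S).
Proof.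
apply/setP => y; rewrite -[y in LHS](monomialVK s e) mem_imset; last first.
  exact: monomial_inj.
by rewrite monomial_in_parity_code im_permV.
Qed.

Lemma code_equiv_parity_code (S T : {set 'I_n}) :
  code_equiv (parity_code S) (parity_code T) = (#|S| == #|T|).
Proof.
apply/existsP/eqP => [[s /existsP[e /eqP]]|cardST].
  rewrite monomial_parity_code => /parity_code_inj ->.
  by rewrite card_preimset //; apply: perm_inj.
have [t tST] := exists_perm_imset cardST.
exists t^-1%g; apply/existsP; exists [ffun=> false].
by rewrite monomial_parity_code preim_permV tST.
Qed.

(* Witnesses of a word nonzero at i: [2e_i] if i is not in T, else [2e_i + 2e_j]
   for some other j in T. *)
Lemma parity_code_vanishing (T : {set 'I_n}) (i : 'I_n) :
  {in parity_code T, forall x : word n, x 0 i = 0} -> T = [set i].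
Proof.
move=> vanish; have iT : i \in T.
  apply/negPn/negP => iT; move: (vanish (twice_unit i)).
  rewrite twice_unit_in_parity_code iT mxE eqxx => /(_ isT)/eqP.
  by rewrite (negbTE Z4_two_neq0).
apply/setP => j; rewrite inE; apply/idP/eqP => [jT|->//]; apply/eqP.
apply/negPn/negP => ji; have ij : (i == j) = false by rewrite eq_sym (negbTE ji).
have x_in : twice_unit i + twice_unit j \in parity_code T.
  rewrite inE; apply/andP; split.
    by apply/forallP => k; rewrite mxE addrACA !twice_unit_order2 addr0.
  under eq_bigr do rewrite mxE.
  by rewrite big_split /= !sum_twice_unit iT jT Z4_two_add_two.
move: (vanish _ x_in); rewrite !mxE eqxx ij addr0 => /eqP.
by rewrite (negbTE Z4_two_neq0).
Qed.

Lemma card_parity_support_lt (C : {set word n}) : (#|parity_support C| < n.+1)%N.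
Proof. by rewrite ltnS -[n in (_ <= n)%N]card_ord max_card. Qed.

Definition parity_size (C : {set word n}) : 'I_n.+1 :=
  Ordinal (card_parity_support_lt C).

End ParityCode.

Definition equiv_triv_ext (n : nat) (C : {set word n}) : bool :=
  [exists D : {set word n.-1}, is_code D && code_equiv C (triv_ext D)].

Section TypeTwoCodes.
Variable m : nat.
Local Notation widen := (widen_ord (leqnSn m)).

Lemma widen_inj : injective widen.
Proof. by move=> i j /(congr1 val) ij; apply/val_inj. Qed.

Lemma widen_neq_max (i : 'I_m) : (widen i == ord_max) = false.
Proof. by rewrite -val_eqE /= ltn_eqF. Qed.

Lemma widen_or_max (j : 'I_m.+1) : (exists i, j = widen i) \/ j = ord_max.
Proof.
case: (ltnP j m) => jm; first by left; exists (Ordinal jm); apply/val_inj.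
by right; apply/val_inj/eqP; rewrite /= eqn_leq jm -ltnS ltn_ord.
Qed.

Lemma std_gen_entries (G : 'M['Z_4]_(0 + m, m.+1)) : std_gen G ->
  (forall i j : 'I_m, G i (widen j) = (i == j)%:R *+ 2) /\
  (forall i : 'I_m, G i ord_max = 0 \/ G i ord_max = 2%:R).
Proof.
move/forallP => std; split => [i j|i].
  by move: (forallP (std i) (widen j)); rewrite /= ltn_ord => /eqP.
by move: (forallP (std i) ord_max); rewrite /= ltnn => /orP[] /eqP; [left|right].
Qed.

Definition std_support (G : 'M['Z_4]_(0 + m, m.+1)) : {set 'I_m.+1} :=
  ord_max |: [set widen i | i in [set i : 'I_m | G i ord_max == 2%:R]].

Lemma sum_std_support (G : 'M['Z_4]_(0 + m, m.+1)) (x : word m.+1) :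
  \sum_(j in std_support G) x 0 j
    = x 0 ord_max + \sum_(i < m) (G i ord_max == 2%:R)%:R * x 0 (widen i).
Proof.
rewrite big_setU1 /=; last first.
  by apply/imsetP => -[i _ /eqP]; rewrite eq_sym widen_neq_max.
rewrite big_imset /=; last by move=> i j _ _; apply: widen_inj.
rewrite big_mkcond; congr (_ + _); apply: eq_bigr => i _.
by rewrite inE; case: eqP; rewrite ?mul1r ?mul0r.
Qed.

Lemma span_std_gen (G : 'M['Z_4]_(0 + m, m.+1)) : std_gen G ->
  [set c *m G | c : 'rV['Z_4]_(0 + m)] = parity_code (std_support G).
Proof.
move=> /std_gen_entries [G_widen G_max].
have mul_widen (c : 'rV_(0 + m)) j : (c *m G) 0 (widen j) = c 0 j * 2%:R.
  rewrite mxE (bigD1 j) //= G_widen eqxx big1 ?addr0 // => i /negbTE ij.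
  by rewrite G_widen ij mul0rn mulr0.
have G_max2 i : G i ord_max + G i ord_max = 0.
  by case: (G_max i) => ->; rewrite ?addr0 ?Z4_two_add_two.
apply/setP => x; rewrite inE sum_std_support; apply/imsetP/andP.
- case=> c _ ->; split.
    apply/forallP => j; case: (widen_or_max j) => [[i ->]|->].
      by rewrite mul_widen -mulrDr Z4_two_add_two mulr0.
    by rewrite mxE -big_split big1 //= => i _; rewrite -mulrDr G_max2 mulr0.
  rewrite mxE -big_split big1 //= => i _; rewrite mul_widen.
  case: (G_max i) => ->.
    by rewrite mulr0 eq_sym (negbTE Z4_two_neq0) mul0r addr0.
  by rewrite eqxx mul1r -mulrDr Z4_two_add_two mulr0.
- case=> /forallP x2 sum0; exists (\row_i (x 0 (widen i) == 2%:R)%:R) => //.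
  have x_max : x 0 ord_max
               = \sum_(i < m) (G i ord_max == 2%:R)%:R * x 0 (widen i).
    rewrite -[LHS]Z4_opp_of_order2; last exact/eqP.
    by apply/eqP; rewrite eq_sym -addr_eq0 addrC.
  apply/rowP => j; case: (widen_or_max j) => [[i ->]|->].
    by rewrite mul_widen mxE Z4_half_of_order2 //; apply/eqP.
  rewrite x_max mxE; apply: eq_bigr => i _; rewrite mxE.
  case: (G_max i) => ->; first by rewrite eq_sym (negbTE Z4_two_neq0) !mulr0 mul0r.
  by rewrite eqxx mul1r Z4_half_of_order2 //; apply/eqP.
Qed.

Definition std_matrix (T : {set 'I_m.+1}) : 'M['Z_4]_(0 + m, m.+1) :=
  \matrix_(i < 0 + m, j < m.+1)
     if (j < m)%N then (i == j :> nat)%:R *+ 2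
     else if widen i \in T then 2%:R else 0.

Lemma std_gen_std_matrix (T : {set 'I_m.+1}) : std_gen (std_matrix T).
Proof.
apply/forallP => i; apply/forallP => j; rewrite mxE /=.
by case: ltnP => //= _; case: ifP; rewrite eqxx ?orbT.
Qed.

Lemma std_support_std_matrix (T : {set 'I_m.+1}) :
  ord_max \in T -> std_support (std_matrix T) = T.
Proof.
move=> maxT; apply/setP => j; case: (widen_or_max j) => [[i ->]|->]; last first.
  by rewrite maxT !inE eqxx.
rewrite !inE widen_neq_max mem_imset ?inE; last exact: widen_inj.
by rewrite mxE ltnn; case: ifP; rewrite ?eqxx // eq_sym (negbTE Z4_two_neq0).
Qed.

Lemma has_type_parity (C : {set word m.+1}) :
  has_type 0 m C -> exists2 S, C = parity_code S & S != set0.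
Proof.
case/andP => _ /existsP[s /existsP[G /andP[G_std /eqP sC]]].
rewrite span_std_gen // /perm_code (eq_imset _ (perm_word_monomial s)) in sC.
exists (s @: std_support G).
  apply/setP => x; rewrite -(monomial_in_parity_code s [ffun=> false]) -sC.
  by rewrite mem_imset //; apply: monomial_inj.
by apply/set0Pn; exists (s ord_max); apply: imset_f; rewrite setU11.
Qed.

(* Move a point of S to the last coordinate, where the standard form carries
   the parity check. *)
Lemma parity_code_has_type (S : {set 'I_m.+1}) :
  S != set0 -> has_type 0 m (parity_code S).
Proof.
case/set0Pn => i iS; pose s := tperm i ord_max.
have maxT : ord_max \in s @^-1: S by rewrite inE tpermR.
apply/andP; split; first by rewrite add0n leqnSn.
apply/existsP; exists s; apply/existsP; exists (std_matrix (s @^-1: S)).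
rewrite std_gen_std_matrix span_std_gen ?std_gen_std_matrix //.
rewrite std_support_std_matrix // /perm_code (eq_imset _ (perm_word_monomial s)).
by rewrite monomial_parity_code eqxx.
Qed.

Lemma triv_ext_word_max (c : word m) : triv_ext_word (n := m.+1) c 0 ord_max = 0.
Proof. by rewrite mxE insubF //= ltnn. Qed.

Lemma triv_ext_parity_code0 :
  triv_ext (n := m.+1) (parity_code set0) = parity_code [set ord_max].
Proof.
apply/setP => x; rewrite [in RHS]inE big_set1; apply/imsetP/andP.
- case=> c; rewrite inE => /andP[/forallP c2 _] ->; split; last first.
    by rewrite triv_ext_word_max.
  by apply/forallP => j; rewrite mxE; case: insubP => [j' _ _|_]; rewrite ?addr0.
- case=> /forallP x2 /eqP x_max; exists (\row_j x 0 (widen j)).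
    by rewrite inE big_set0 eqxx andbT; apply/forallP => j; rewrite mxE.
  apply/rowP => j; rewrite mxE; case: insubP => [j' _ j'j|jm].
    by rewrite mxE; congr (x 0 _); apply/val_inj.
  by case: (widen_or_max j) jm => [[i ->]|->] //=; rewrite ltn_ord.
Qed.

Lemma equiv_triv_ext_parity_code (S : {set 'I_m.+1}) :
  equiv_triv_ext (parity_code S) = (#|S| == 1%N).
Proof.
apply/existsP/eqP => [[D /andP[_ /existsP[s /existsP[e /eqP DS]]]]|S1].
  rewrite monomial_parity_code in DS.
  have /parity_code_vanishing S_max : {in parity_code (s @^-1: S),
                                       forall x : word m.+1, x 0 ord_max = 0}.
    by rewrite -DS => _ /imsetP[c _ ->]; apply: triv_ext_word_max.
  by rewrite -(card_preimset _ (@perm_inj _ s)) S_max cards1.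
exists (parity_code set0); rewrite is_code_parity_code /=.
by rewrite triv_ext_parity_code0 code_equiv_parity_code S1 cards1.
Qed.

Lemma good_parity_code (S : {set 'I_m.+1}) :
  good_code 0 m (parity_code S) = (1 < #|S|)%N.
Proof.
rewrite /good_code is_code_parity_code -/(equiv_triv_ext _).
rewrite equiv_triv_ext_parity_code /=.
have [S0|SN0] := eqVneq S set0.
  rewrite S0 cards0 andbT; apply/negbTE/negP.
  by case/has_type_parity => T /parity_code_inj <-; rewrite eqxx.
rewrite parity_code_has_type //=; rewrite -card_gt0 in SN0.
by rewrite ltn_neqAle SN0 andbT eq_sym.
Qed.

Lemma good_code_parity (C : {set word m.+1}) :
  good_code 0 m C -> exists S, C = parity_code S.
Proof. by case/and3P => _ /has_type_parity[S -> _] _; exists S. Qed.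

Lemma image_parity_size_good :
  [set parity_size C | C in [set C | good_code 0 m C]]
    = [set k : 'I_m.+2 | (2 <= k)%N].
Proof.
apply/setP => k; rewrite inE; apply/imsetP/idP.
  case=> C; rewrite inE => /[dup] /good_code_parity[S ->].
  by rewrite good_parity_code => S2 ->; rewrite /= parity_codeK.
move=> k2; have km : (k <= m.+1)%N by rewrite -ltnS.
pose S := [set widen_ord km i | i in 'I_k].
have cardS : #|S| = k.
  by rewrite card_imset ?card_ord // => i j /(congr1 val) ij; apply/val_inj.
exists (parity_code S); first by rewrite inE good_parity_code cardS.
by apply/val_inj; rewrite /= parity_codeK.
Qed.

End TypeTwoCodes.

Theorem mainTheorem7 (n : nat) : (0 < n)%N -> Nprime n 0 n.-1 = n.-1.
Proof.
case: n => // m _ /=.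
rewrite /Nprime (card_classes_by_invariant (f := @parity_size m.+1)) => [|C D].
  by rewrite image_parity_size_good card_ord_geq subn2.
move=> /good_code_parity[S ->] /good_code_parity[T ->].
by rewrite code_equiv_parity_code -val_eqE /= !parity_codeK.
Qed.
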